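(* Let $q=2^r$ with $r\ge1$. Let $k\ne1$ be an element of $(\mathbb{Z}/q\mathbb{Z})^\times$ and let $\theta_k$ denote multiplication by $k$ on $(\mathbb{Z}/q\mathbb{Z})^\times$. Let $f:(\mathbb{Z}/2^r\mathbb{Z})^\times\to\mathbb{R}$ be a function that is monotonic on $[1,2^r]_\mathbb{Z}$. If $f\circ\theta_k=f$, then $f$ is constant on $[1,2^{r-1}]_\mathbb{Z}$.
   Context: $[a,b]_\mathbb{Z}$ denotes the set of odd integers in the closed interval $[a,b]$; $[1,2^r]_\mathbb{Z}$ is used as the set of representatives of $(\mathbb{Z}/2^r\mathbb{Z})^\times$, and ''monotonic on $[1,2^r]_\mathbb{Z}$'' means $i\mapsto f(i\bmod 2^r)$ is monotonic on this set of integers. *)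

From HB Require Import structures.
From mathcomp Require Import all_boot all_order all_algebra.
From mathcomp Require Import reals.
Set Implicit Arguments. Unset Strict Implicit. Unset Printing Implicit Defensive.
Import Order.TTheory GRing.Theory Num.Theory.
Local Open Scope ring_scope.

(* residue of the natural number i in Z/2^rZ (for r >= 1, 'Z_(2^r) is Z/2^rZ) *)
Definition zres (r i : nat) : 'Z_(2 ^ r) := i%:R.

Definition monotone_on_odd (R : realType) (r : nat) (f : 'Z_(2 ^ r) -> R) : Prop :=
  (forall i j : nat, odd i -> odd j -> (1 <= i)%N -> (i <= j)%N -> (j <= 2 ^ r)%N ->
      f (zres r i) <= f (zres r j))
  \/
  (forall i j : nat, odd i -> odd j -> (1 <= i)%N -> (i <= j)%N -> (j <= 2 ^ r)%N ->
      f (zres r j) <= f (zres r i)).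

From mathcomp Require Import all_boot all_order all_algebra.
From mathcomp Require Import reals cyclic zify.
Import Order.TTheory GRing.Theory Num.Theory.

(* Euler's theorem gives k^(2^(r-1)) = 1, so some power z of k is an
   involution different from 1, and f z = f 1 by the invariance of f.  An odd
   square root y of 1 modulo 2^r other than 1 satisfies 2^(r-1) <= y + 1,
   since 2^r divides (y - 1)(y + 1) and only one of the two factors is
   divisible by 4.  Hence every odd number in [1, 2^(r-1)] lies between 1 and
   the representative of z, and monotonicity squeezes f to the constant f 1. *)

Lemma pow2_dvdn_mul_succ_leq (n b : nat) :
  (0 < b)%N -> (2 ^ n %| b * b.+1)%N -> (2 ^ n <= b.+1)%N.
Proof.
move=> b_gt0 dvd_bb1; have [b_odd | b_even] := boolP (odd b).
- have: (2 ^ n %| b.+1)%N by rewrite -(@Gauss_dvdr _ b) // coprimeXl // coprime2n.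
  exact: dvdn_leq.
- have: (2 ^ n %| b)%N by rewrite -(@Gauss_dvdl _ _ b.+1) // coprimeXl // coprime2n /=.
  by move/(dvdn_leq b_gt0); apply: leqW.
Qed.

Lemma odd_sqrt1_mod_pow2_leq (r y : nat) :
  odd y -> y != 1%N -> (2 ^ r %| y * y - 1)%N -> (2 ^ r.-1 <= y.+1)%N.
Proof.
case: r => [|[|n]] /=; try by rewrite expn0.
move=> y_odd y_neq1; rewrite -(odd_double_half y) y_odd -!muln2 /=.
set b := y./2 => dvd_yy1.
have b_gt0 : (0 < b)%N by move: y_neq1 y_odd; rewrite -(odd_double_half y) /b; lia.
have /(pow2_dvdn_mul_succ_leq _ _ b_gt0) : (2 ^ n %| b * b.+1)%N.
  rewrite -(dvdn_pmul2l (isT : 0 < 4)%N) -[4%N]/(2 ^ 2)%N -expnD.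
  by have -> : (4 * (b * b.+1) = (1 + b * 2) * (1 + b * 2) - 1)%N by lia.
by rewrite expnS; lia.
Qed.

Local Open Scope ring_scope.

Lemma expr_pow2_neq1_involution {R : nzRingType} {x : R} {n : nat} :
  x ^+ (2 ^ n) = 1 -> x != 1 -> exists m, x ^+ m != 1 /\ x ^+ m * x ^+ m = 1.
Proof.
elim: n => [|n IHn] x2n_eq1 x_neq1; first by rewrite -x2n_eq1 expn0 expr1 eqxx in x_neq1.
have [x2n_1 | x2n_neq1] := eqVneq (x ^+ (2 ^ n)) 1; first exact: IHn.
by exists (2 ^ n)%N; rewrite -exprD addnn -mul2n -expnS.
Qed.

Lemma mul_invariant_expr (R : unitRingType) (T : Type) (f : R -> T) (k : R) :
  k \is a GRing.unit -> (forall x, x \is a GRing.unit -> f (k * x) = f x) ->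
  forall m, f (k ^+ m) = f 1.
Proof.
move=> k_unit f_inv; elim=> [|m IHm]; first by rewrite expr0.
by rewrite exprS f_inv ?unitrX.
Qed.

Lemma monotone_on_odd_squeeze (R : realType) (r : nat) (f : 'Z_(2 ^ r) -> R)
    (y x : nat) :
  monotone_on_odd f -> odd y -> (y <= 2 ^ r)%N -> f (zres r y) = f (zres r 1) ->
  odd x -> (1 <= x <= y)%N -> f (zres r x) = f (zres r 1).
Proof.
move=> f_mono y_odd y_le f_y x_odd /andP[x_ge1 x_le].
have x_le2 := leq_trans x_le y_le.
apply/le_anti/andP; case: f_mono => f_mono; split.
- by rewrite -f_y; apply: f_mono.
- exact: f_mono.
- exact: f_mono.
- by rewrite -f_y; apply: f_mono.
Qed.

Section UnitsModPow2.

Context {r : nat}.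
Hypothesis r_gt0 : (0 < r)%N.

Local Notation Z := 'Z_(2 ^ r).

Let q_gt1 : (1 < 2 ^ r)%N.
Proof. by rewrite -{1}(expn0 2) ltn_exp2l. Qed.

Lemma Zp_pow2_val_ltn (z : Z) : (val z < 2 ^ r)%N.
Proof. by rewrite -[X in (_ < X)%N](Zp_cast q_gt1) ltn_ord. Qed.

Lemma Zp_natr_eqE (a b : nat) : ((a%:R : Z) == b%:R) = (a == b %[mod 2 ^ r])%N.
Proof. by rewrite -val_eqE /= !val_Zp_nat // Zp_cast. Qed.

Lemma Zp_pow2_unitE (z : Z) : (z \is a GRing.unit) = odd (val z).
Proof. by rewrite -(natr_Zp z) unitZpE // coprime_pexpl // coprime2n natr_Zp. Qed.

Lemma Zp_pow2_unit_expr {z : Z} : z \is a GRing.unit -> z ^+ (2 ^ r.-1) = 1.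
Proof.
move=> z_unit; have z_cop : coprime (val z) (2 ^ r).
  by rewrite coprime_sym -unitZpE // natr_Zp.
have totient_q : totient (2 ^ r) = (2 ^ r.-1)%N by rewrite totient_pfactor // mul1n.
apply/eqP; rewrite -(natr_Zp z) -natrX -totient_q -[1]/(1%:R) Zp_natr_eqE.
by apply/eqP; apply: Euler_exp_totient.
Qed.

Lemma Zp_pow2_involution_leq {z : Z} :
  z * z = 1 -> z != 1 -> (2 ^ r.-1 <= (val z).+1)%N.
Proof.
move=> zz_eq1 z_neq1; have z_unit : z \is a GRing.unit by apply/unitrP; exists z.
apply: odd_sqrt1_mod_pow2_leq; first by rewrite -Zp_pow2_unitE.
  by apply: contra z_neq1 => /eqP z1; rewrite -(natr_Zp z) z1.
rewrite -eqn_mod_dvd; last by rewrite muln_gt0 andbb odd_gt0 // -Zp_pow2_unitE.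
by rewrite -Zp_natr_eqE natrM natr_Zp zz_eq1.
Qed.

End UnitsModPow2.

Theorem lemma4p3 (R : realType) (r : nat) (hr : (1 <= r)%N)
  (k : 'Z_(2 ^ r)) (hku : k \is a GRing.unit) (hk1 : k != 1)
  (f : 'Z_(2 ^ r) -> R) (hmono : monotone_on_odd f)
  (hinv : forall x : 'Z_(2 ^ r), x \is a GRing.unit -> f (k * x) = f x) :
  forall i j : nat, odd i -> odd j -> (1 <= i)%N -> (i <= 2 ^ r.-1)%N ->
    (1 <= j)%N -> (j <= 2 ^ r.-1)%N -> f (zres r i) = f (zres r j).
Proof.
have [m [z_neq1 zz_eq1]] :=
  expr_pow2_neq1_involution (Zp_pow2_unit_expr hr hku) hk1.
set z := k ^+ m in z_neq1 zz_eq1.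
have z_odd : odd (val z) by rewrite -Zp_pow2_unitE ?unitrX.
have z_le : (val z <= 2 ^ r)%N by apply/ltnW/Zp_pow2_val_ltn.
have f_z : f (zres r (val z)) = f (zres r 1).
  by rewrite /zres natr_Zp mul_invariant_expr.
have f_const x : odd x -> (1 <= x)%N -> (x <= 2 ^ r.-1)%N -> f (zres r x) = f (zres r 1).
  move=> x_odd x_ge1 x_le; apply: monotone_on_odd_squeeze f_z _ _ => //.
  have := Zp_pow2_involution_leq hr zz_eq1 z_neq1.
  have : x != (val z).+1 by apply: contraTneq x_odd => ->; rewrite /= z_odd.
  by rewrite x_ge1 /=; lia.
by move=> i j i_odd j_odd i_ge1 i_le j_ge1 j_le; rewrite !f_const.
Qed.
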